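(* Let $p$ be an even integer and let $n$ be an odd integer with $n\ge p+1\ge 5$. Then there exists a simple graph of order $n$ and size $\mathrm{ex}(n,K_{1,p})+1$ which contains exactly one copy of $K_{1,p}$.
   Context: All graphs are finite and simple. The order of a graph is its number of vertices and its size is its number of edges. A copy of $H$ in $G$ is a subgraph of $G$ isomorphic to $H$; the number of copies of $H$ in $G$ is the number of distinct subgraphs of $G$ isomorphic to $H$. For a graph $H$ and a positive integer $n$, the Turán number $\mathrm{ex}(n,H)$ is the maximum size of a simple graph of order $n$ containing no copy of $H$. $K_{1,p}$ denotes the star with $p$ edges (order $p+1$). *)

From mathcomp Require Import all_boot.
Set Implicit Arguments.
Unset Strict Implicit.
Unset Printing Implicit Defensive.

Definition simple_graph (T : finType) (e : rel T) : bool :=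
  [forall x, ~~ e x x] && [forall x, [forall y, e x y == e y x]].

Definition edges (T : finType) (e : rel T) : {set {set T}} :=
  [set [set x; y] | x in T, y in T & e x y].

Definition gsize (T : finType) (e : rel T) : nat := #|edges e|.

Definition is_copy (TH : finType) (eH : rel TH) (T : finType) (e : rel T)
    (W : {set T}) (F : {set {set T}}) : bool :=
  (F \subset edges e) &&
  [exists f : {ffun TH -> T},
     [&& injectiveb f, W == f @: TH &
         F == [set [set f x; f y] | x in TH, y in TH & eH x y]]].

Definition ncopies (TH : finType) (eH : rel TH) (T : finType) (e : rel T) : nat :=
  #|[set WF : {set T} * {set {set T}} | is_copy eH e WF.1 WF.2]|.

(* Graphs of order n are encoded as relations on 'I_n (via finite functions,
   so that one can range over all of them). *)
Definition rel_of (n : nat) (g : {ffun 'I_n * 'I_n -> bool}) : rel 'I_n :=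
  fun x y => g (x, y).

Definition ex (n : nat) (TH : finType) (eH : rel TH) : nat :=
  \max_(g : {ffun 'I_n * 'I_n -> bool} |
          simple_graph (rel_of g) && (ncopies eH (rel_of g) == 0))
     gsize (rel_of g).

Definition star_rel (p : nat) : rel 'I_p.+1 :=
  fun i j => (i != j) && ((i == ord0) || (j == ord0)).
Arguments star_rel p : clear implicits.

From mathcomp Require Import all_boot zify.

(* A graph without a copy of K_{1,p} has maximum degree at most p - 1, so twice
   its size is at most n(p - 1); when n is odd and p is even this number is odd,
   hence ex(n, K_{1,p}) <= (n(p - 1) - 1)/2.  Write p = 2h.  Removing the matching
   {1,2}, {3,4}, ..., {n-2,n-1} from the p-regular circulant graph C_n(1, ..., h)
   leaves a graph in which 0 has degree p and every other vertex degree p - 1.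
   Its size is (n(p - 1) + 1)/2, and its only copy of K_{1,p} is the star formed by
   0 and its whole neighbourhood.  Removing the edge {0,1} as well yields a
   K_{1,p}-free graph of size (n(p - 1) - 1)/2, so the bound on ex is attained. *)

Set Implicit Arguments.
Unset Strict Implicit.
Unset Printing Implicit Defensive.

Section Degree.
Variable T : finType.

Definition deg (e : rel T) (x : T) : nat := #|[set y | e x y]|.

Definition rel_diff (e r : rel T) : rel T := fun x y => e x y && ~~ r x y.

Lemma deg_rel_diff (e r : rel T) x :
  subrel r e -> deg (rel_diff e r) x = deg e x - deg r x.
Proof.
move=> sub_re; have sub : [set y | r x y] \subset [set y | e x y].
  by apply/subsetP => y; rewrite !inE => /sub_re.
rewrite /deg -(setIidPr sub) -cardsD.
by apply: eq_card => y; rewrite !inE andbC.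
Qed.

Lemma sum_deg_rel_diff (e r : rel T) :
  subrel r e -> \sum_x deg (rel_diff e r) x = \sum_x deg e x - \sum_x deg r x.
Proof.
move=> sub_re; rewrite -sumnB => [|x _]; first by apply: eq_bigr => x _; rewrite deg_rel_diff.
by apply: subset_leq_card; apply/subsetP => y; rewrite !inE => /sub_re.
Qed.

Lemma simple_graphP (e : rel T) : reflect (irreflexive e /\ symmetric e) (simple_graph e).
Proof.
apply: (iffP andP) => [[/forallP irr /forallP sym]|[irr sym]]; split.
- by move=> x; apply/negbTE.
- by move=> x y; apply/eqP; have /forallP := sym x.
- by apply/forallP => x; rewrite irr.
- by apply/forallP => x; apply/forallP => y; rewrite sym.
Qed.

Lemma simple_graph_rel_diff (e r : rel T) :
  simple_graph e -> symmetric r -> simple_graph (rel_diff e r).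
Proof.
move=> /simple_graphP[irr sym] sym_r; apply/simple_graphP; split => [x|x y].
  by rewrite /rel_diff irr.
by rewrite /rel_diff sym sym_r.
Qed.

End Degree.

Lemma set2_eq_cases (T : finType) (a b x y : T) :
  [set x; y] = [set a; b] -> x != y -> (x = a /\ y = b) \/ (x = b /\ y = a).
Proof.
move=> E nxy; have /set2P xab : x \in [set a; b] by rewrite -E set21.
have /set2P yab : y \in [set a; b] by rewrite -E set22.
by case: xab yab => ? [] ?; subst; rewrite ?eqxx in nxy; auto.
Qed.

Lemma eq_edges (T : finType) (e1 e2 : rel T) : e1 =2 e2 -> edges e1 = edges e2.
Proof.
move=> e12; apply/setP => E; apply/imset2P/imset2P => -[x y _];
  by rewrite !inE ?e12 => exy ->; exists x y; rewrite ?inE ?e12.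
Qed.

Section SimpleGraph.
Variables (T : finType) (e : rel T).
Hypothesis e_simple : simple_graph e.

Let e_irr : irreflexive e. Proof. by case/simple_graphP: e_simple. Qed.
Let e_sym : symmetric e. Proof. by case/simple_graphP: e_simple. Qed.

Lemma edgesP x y : x != y -> reflect (e x y) ([set x; y] \in edges e).
Proof.
move=> nxy; apply: (iffP imset2P) => [[a b _]|exy]; last by exists x y; rewrite ?inE.
rewrite !inE /= => eab /set2_eq_cases/(_ nxy)[[-> ->]|[-> ->]] //.
by rewrite e_sym.
Qed.

Lemma sum_deg : \sum_x deg e x = (gsize e).*2.
Proof.
have -> : \sum_x deg e x = \sum_(xy : T * T | e xy.1 xy.2) 1.
  rewrite -(pair_big_dep predT (fun x y => e x y) (fun _ _ => 1)) /=.
  by apply: eq_bigr => x _; rewrite sum1dep_card.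
rewrite (partition_big (fun xy : T * T => [set xy.1; xy.2]) (mem (edges e))) /=;
  last by case=> x y /= exy; apply/imset2P; exists x y; rewrite ?inE.
rewrite -muln2 /gsize -sum_nat_const; apply: eq_bigr => E /imset2P[a b _].
rewrite !inE /= => eab ->; rewrite sum1dep_card.
have -> : [set xy : T * T | e xy.1 xy.2 && ([set xy.1; xy.2] == [set a; b])]
        = [set (a, b); (b, a)].
  apply/setP => -[x y]; rewrite !inE /=; apply/idP/idP.
  - case/andP => exy /eqP Exy.
    have nxy : x != y by apply: contraTneq exy => ->; rewrite e_irr.
    by case: (set2_eq_cases Exy nxy) => -[-> ->]; rewrite eqxx ?orbT.
  - by case/orP => /eqP[-> ->]; rewrite ?eab ?eqxx // e_sym eab setUC eqxx.
by rewrite cards2; case: eqP => // -[ab _]; rewrite ab e_irr in eab.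
Qed.

End SimpleGraph.

Lemma ncopies_eq0 (TH T : finType) (eH : rel TH) (e : rel T) :
  ncopies eH e = 0 <-> forall W F, ~~ is_copy eH e W F.
Proof.
rewrite /ncopies; split => [/eqP|noc]; last first.
  by apply/eqP; rewrite cards_eq0; apply/eqP/setP => -[W F]; rewrite !inE (negbTE (noc W F)).
rewrite cards_eq0 => /eqP copies0 W F; apply/negP => cWF.
suff : (W, F) \in set0 by rewrite in_set0.
by rewrite -copies0 inE.
Qed.

Section StarCopies.
Variables (T : finType) (e : rel T) (p : nat).
Hypothesis e_simple : simple_graph e.

Let e_irr : irreflexive e. Proof. by case/simple_graphP: e_simple. Qed.

Definition star_edges (f : 'I_p.+1 -> T) : {set {set T}} :=
  [set [set f x; f y] | x in 'I_p.+1, y in 'I_p.+1 & star_rel p x y].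

Lemma star_edgesE f : star_edges f = [set [set f ord0; v] | v in f @: [set~ ord0]].
Proof.
apply/setP => E; apply/imset2P/imsetP.
- case=> x y _; rewrite !inE /star_rel => /and3P[_ nxy centre] ->.
  case/orP: centre => /eqP ?; subst.
    by exists (f y) => //; apply: imset_f; rewrite !inE eq_sym.
  by exists (f x); [apply: imset_f; rewrite !inE | rewrite setUC].
- case=> v /imsetP[i]; rewrite !inE => ni -> ->.
  by exists ord0 i; rewrite // !inE /star_rel eq_sym ni.
Qed.

Lemma star_copyP W F :
  reflect (exists f : {ffun 'I_p.+1 -> T},
             [/\ injective f, W = f @: 'I_p.+1, F = star_edges f &
                 f @: [set~ ord0] \subset [set y | e (f ord0) y]])
          (is_copy (star_rel p) e W F).
Proof.
apply: (iffP andP) => [[sFe /existsP[f /and3P[/injectiveP f_inj /eqP-> /eqP EF]]]|].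
  exists f; split => //; apply/subsetP => v /imsetP[i]; rewrite !inE => ni ->.
  apply/edgesP; rewrite ?(inj_eq f_inj) 1?eq_sym //; apply: (subsetP sFe).
  rewrite [F]EF -/(star_edges f) star_edgesE.
  by apply/imsetP; exists (f i); rewrite // imset_f ?inE.
case=> f [f_inj -> -> leaves]; split; last first.
  by apply/existsP; exists f; rewrite !eqxx !andbT; apply/injectiveP.
rewrite (star_edgesE f); apply/subsetP => E /imsetP[v /(subsetP leaves)].
by rewrite inE => ev ->; apply/imset2P; exists (f ord0) v; rewrite ?inE.
Qed.

Lemma card_star_leaves (f : 'I_p.+1 -> T) :
  injective f -> #|f @: [set~ ord0]| = p.
Proof. by move=> f_inj; rewrite card_imset // cardsC1 card_ord. Qed.

Lemma star_centre_deg (f : 'I_p.+1 -> T) :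
  injective f -> f @: [set~ ord0] \subset [set y | e (f ord0) y] ->
  p <= deg e (f ord0).
Proof. by move=> f_inj /subset_leq_card; rewrite card_star_leaves. Qed.

Lemma star_copy_of_deg c :
  p <= deg e c -> exists W F, is_copy (star_rel p) e W F.
Proof.
move=> le_p_c; pose leaf (j : 'I_p) := enum_val (widen_ord le_p_c j).
have e_leaf j : e c (leaf j).
  by have := enum_valP (widen_ord le_p_c j); rewrite inE.
pose f := [ffun i => if unlift ord0 i is Some j then leaf j else c].
have f0 : f ord0 = c by rewrite ffunE unlift_none.
have f_lift j : f (lift ord0 j) = leaf j by rewrite ffunE liftK.
exists (f @: 'I_p.+1), (star_edges f); apply/star_copyP; exists f; split => //.
  move=> i1 i2; case: (unliftP ord0 i1) => [j1|] ->; case: (unliftP ord0 i2) => [j2|] ->.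
  - rewrite !f_lift => /enum_val_inj/(congr1 val) /= j12.
    by congr lift; apply: val_inj.
  - by rewrite f_lift f0 => leaf_c; have := e_leaf j1; rewrite leaf_c e_irr.
  - by rewrite f_lift f0 => c_leaf; have := e_leaf j2; rewrite -c_leaf e_irr.
  - by [].
apply/subsetP => v /imsetP[i]; rewrite !inE f0 => ni ->.
case: (unliftP ord0 i) ni => [j|] -> //= _.
by rewrite (f_lift j).
Qed.

Lemma ncopies_star_eq0 :
  ncopies (star_rel p) e = 0 <-> forall v, deg e v < p.
Proof.
rewrite ncopies_eq0; split => [nocopy v | lt_deg W F].
  rewrite ltnNge; apply/negP => /star_copy_of_deg[W [F cWF]].
  by have := nocopy W F; rewrite cWF.
apply/star_copyP => -[f [f_inj _ _ leaves]].
by have := lt_deg (f ord0); rewrite ltnNge star_centre_deg.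
Qed.

Lemma ncopies_star_eq1 c :
  deg e c = p -> (forall v, p <= deg e v -> v = c) -> ncopies (star_rel p) e = 1.
Proof.
move=> deg_c uniq_c; set N := [set y | e c y].
have copy_canon W F : is_copy (star_rel p) e W F ->
    (W, F) = (c |: N, [set [set c; v] | v in N]).
  case/star_copyP => f [f_inj -> -> leaves].
  have f0 : f ord0 = c by apply/uniq_c/star_centre_deg.
  have fN : f @: [set~ ord0] = N.
    have card_N : #|N| = p := deg_c.
    by apply/eqP; rewrite eqEcard card_star_leaves // card_N leqnn andbT /N -f0.
  rewrite -{}fN -{}f0 (star_edgesE f) -imsetU1 setUCr.
  by congr (_, _); apply/setP => v; apply/imsetP/imsetP => -[i _ ->]; exists i.
have [W [F cWF]] := star_copy_of_deg (eq_leq (esym deg_c)).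
rewrite /ncopies -(cards1 (c |: N, [set [set c; v] | v in N])); apply: eq_card => -[W' F'].
rewrite !inE; apply/idP/eqP => [/copy_canon //|->].
by rewrite -(copy_canon _ _ cWF).
Qed.

End StarCopies.

Lemma eq_simple_graph (T : finType) (e1 e2 : rel T) :
  e1 =2 e2 -> simple_graph e1 = simple_graph e2.
Proof.
move=> e12; rewrite /simple_graph; congr (_ && _); apply: eq_forallb => x.
  by rewrite e12.
by apply: eq_forallb => y; rewrite !e12.
Qed.

Lemma leq_ex n (TH : finType) (eH : rel TH) (e : rel 'I_n) :
  simple_graph e -> ncopies eH e = 0 -> gsize e <= ex n eH.
Proof.
move=> e_simple no_copy; pose g := [ffun xy : 'I_n * 'I_n => e xy.1 xy.2].
have ge : rel_of g =2 e by move=> x y; rewrite /rel_of ffunE.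
have ncopies_g : ncopies eH (rel_of g) = ncopies eH e.
  by rewrite /ncopies /is_copy (eq_edges ge).
rewrite /gsize -(eq_edges ge).
apply: (leq_bigmax_cond (F := fun g => gsize (rel_of g))).
by rewrite (eq_simple_graph ge) e_simple ncopies_g no_copy.
Qed.

Lemma double_gsize_star_free (T : finType) (e : rel T) p :
  simple_graph e -> ncopies (star_rel p) e = 0 -> (gsize e).*2 <= #|T| * p.-1.
Proof.
move=> e_simple /(ncopies_star_eq0 _ e_simple) lt_deg; rewrite -sum_deg // -sum_nat_const.
by apply: leq_sum => x _; have := lt_deg x; lia.
Qed.

Lemma ex_star_le n p : ex n (star_rel p) <= (n * p.-1)./2.
Proof.
apply/bigmax_leqP => g /andP[g_simple /eqP no_copy].
by have := double_gsize_star_free g_simple no_copy; rewrite card_ord; lia.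
Qed.

Lemma ex_star_eq n p (e : rel 'I_n) :
  simple_graph e -> (forall v, deg e v < p) -> odd (n * p.-1) ->
  (gsize e).*2 = (n * p.-1).-1 -> ex n (star_rel p) = gsize e.
Proof.
move=> e_simple lt_deg odd_np size_e; apply/eqP; rewrite eqn_leq.
rewrite leq_ex ?andbT //; last exact/(ncopies_star_eq0 _ e_simple).
have := ex_star_le n p; have := odd_double_half (n * p.-1); rewrite odd_np.
lia.
Qed.

Lemma sum_nat_of_bool (T : finType) (P : pred T) :
  \sum_x (P x : nat) = #|[set x | P x]|.
Proof. by rewrite -sum1dep_card [RHS]big_mkcond; apply: eq_bigr => x _; case: (P x). Qed.

Lemma sum_ord_lt n k : \sum_(i < n) (i < k : nat) = minn k n.
Proof. by elim: n => [|n IHn]; rewrite ?big_ord0 ?big_ord_recr /= ?IHn; lia. Qed.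

Lemma sum_ord_ge n k : \sum_(i < n) (k <= i : nat) = n - k.
Proof. by elim: n => [|n IHn]; rewrite ?big_ord0 ?big_ord_recr /= ?IHn; lia. Qed.

Lemma card_ord_val n (b : bool) k :
  #|[set y : 'I_n | b && (y == k :> nat)]| = b && (k < n).
Proof.
case: b => /=; last by apply: eq_card0 => y; rewrite !inE.
case: ltnP => [lt_kn | le_nk] /=.
  by rewrite -(cards1 (Ordinal lt_kn)); apply: eq_card => y; rewrite !inE -val_eqE.
by apply: eq_card0 => y; rewrite !inE; have := ltn_ord y; lia.
Qed.

Section Circulant.
Variables n h : nat.
Hypotheses (n_odd : odd n) (h_gt0 : 0 < h) (h2_lt_n : h.*2 < n).

Definition cyc_sub (a b : nat) : nat := if b <= a then a - b else a + n - b.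

Definition circulant : rel 'I_n := fun x y =>
  let d := cyc_sub x y in (0 < d) && ((d <= h) || (n - h <= d)).

Lemma circulant_simple : simple_graph circulant.
Proof.
apply/simple_graphP; split => [x | x y]; rewrite /circulant /cyc_sub ?leqnn ?subnn //.
by have := ltn_ord x; have := ltn_ord y; case: ifP; case: ifP; lia.
Qed.

Lemma deg_circulant x : deg circulant x = h.*2.
Proof.
pose P d := (0 < d) && ((d <= h) || (n - h <= d)).
have cyc_sub_lt (y : 'I_n) : cyc_sub x y < n.
  by have := ltn_ord x; have := ltn_ord y; rewrite /cyc_sub; case: ifP; lia.
pose s y := Ordinal (cyc_sub_lt y).
have s_inj : injective s.
  move=> y1 y2 /(congr1 val); rewrite /= /cyc_sub => s12; apply: val_inj => /=.
  have := ltn_ord x; have := ltn_ord y1; have := ltn_ord y2.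
  by move: s12; case: ifP; case: ifP; lia.
rewrite /deg; have -> : [set y | circulant x y] = s @^-1: [set d : 'I_n | P d].
  by apply/setP => y; rewrite !inE.
rewrite card_preimset // -sum_nat_of_bool.
have : \sum_(d < n) ((P d : nat) + (d < 1)) = \sum_(d < n) ((d < h.+1) + (n - h <= d)).
  by apply: eq_bigr => d _; have := ltn_ord d; rewrite /P; lia.
rewrite !big_split /= !sum_ord_lt sum_ord_ge.
by set S := \sum_(i < n) _; lia.
Qed.

Definition partner (a : nat) : nat := if odd a then a.+1 else a.-1.

Definition matched : rel 'I_n := fun x y => (0 < x) && (y == partner x :> nat).

Lemma matched_sym : symmetric matched.
Proof.
move=> x y; rewrite /matched /partner.
have := odd_double_half x; have := odd_double_half y.
by case: (odd x); case: (odd y); move=> /= ? ?; apply/idP/idP; lia.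
Qed.

Lemma deg_matched x : deg matched x = (0 < x).
Proof.
rewrite /deg card_ord_val /partner; case: (posnP x) => //= x_gt0.
have := odd_double_half x; have := odd_double_half n; have := ltn_ord x.
by rewrite n_odd; case: (odd x) => /=; lia.
Qed.

Lemma matched_sub_circulant : subrel matched circulant.
Proof.
move=> x y; rewrite /matched /circulant /cyc_sub /partner; have := ltn_ord y.
by case: (odd x) => /=; case: ifP; lia.
Qed.

Definition star_witness : rel 'I_n := rel_diff circulant matched.

Lemma star_witness_simple : simple_graph star_witness.
Proof. exact: simple_graph_rel_diff circulant_simple matched_sym. Qed.

Lemma deg_star_witness x : deg star_witness x = h.*2 - (0 < x).
Proof. by rewrite deg_rel_diff ?deg_circulant ?deg_matched //; exact: matched_sub_circulant. Qed.

Lemma double_gsize_star_witness : (gsize star_witness).*2 = (n * h.*2.-1).+1.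
Proof.
rewrite -sum_deg ?star_witness_simple // sum_deg_rel_diff; last exact: matched_sub_circulant.
rewrite (eq_bigr _ (fun x _ => deg_circulant x)) (eq_bigr _ (fun x _ => deg_matched x)).
by rewrite sum_nat_const card_ord sum_ord_ge; nia.
Qed.

Lemma ncopies_star_witness : ncopies (star_rel h.*2) star_witness = 1.
Proof.
have n_gt0 : 0 < n by lia.
apply: (ncopies_star_eq1 star_witness_simple (c := Ordinal n_gt0)).
  by rewrite deg_star_witness /=; lia.
by move=> v; rewrite deg_star_witness; case: (posnP v) => [v0 _ | ]; [apply: val_inj | lia].
Qed.

Definition edge01 : rel 'I_n := fun x y => (x < 2) && (y == 1 - x :> nat).

Lemma edge01_sym : symmetric edge01.
Proof. by move=> x y; rewrite /edge01; apply/idP/idP; lia. Qed.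

Lemma deg_edge01 x : deg edge01 x = (x < 2).
Proof. by rewrite /deg card_ord_val; case: ltnP => //=; lia. Qed.

Lemma edge01_sub_star_witness : subrel edge01 star_witness.
Proof.
move=> x y /andP[x_lt2 /eqP y_eq]; have := ltn_ord y.
rewrite /star_witness /rel_diff /circulant /matched /cyc_sub /partner y_eq.
by case: (nat_of_ord x) x_lt2 => [|[|]] //= _; lia.
Qed.

Definition star_extremal : rel 'I_n := rel_diff star_witness edge01.

Lemma star_extremal_simple : simple_graph star_extremal.
Proof. exact: simple_graph_rel_diff star_witness_simple edge01_sym. Qed.

Lemma deg_star_extremal x : deg star_extremal x < h.*2.
Proof.
rewrite deg_rel_diff ?deg_star_witness ?deg_edge01; last exact: edge01_sub_star_witness.
by case: (posnP x) => [->|]; lia.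
Qed.

Lemma double_gsize_star_extremal : (gsize star_extremal).*2 = (n * h.*2.-1).-1.
Proof.
rewrite -sum_deg ?star_extremal_simple // sum_deg_rel_diff; last exact: edge01_sub_star_witness.
rewrite sum_deg ?star_witness_simple // double_gsize_star_witness.
by rewrite (eq_bigr _ (fun x _ => deg_edge01 x)) sum_ord_lt; lia.
Qed.

Lemma gsize_star_witness : gsize star_witness = (gsize star_extremal).+1.
Proof.
have := double_gsize_star_witness; have := double_gsize_star_extremal.
by set N := n * _; lia.
Qed.

Lemma ex_star_extremal : ex n (star_rel h.*2) = gsize star_extremal.
Proof.
apply: ex_star_eq star_extremal_simple deg_star_extremal _ double_gsize_star_extremal.
have -> : h.*2.-1 = (h.-1).*2.+1 by lia.
by rewrite oddM n_odd /= odd_double.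
Qed.

End Circulant.

Theorem theorem1 (p n : nat) :
  ~~ odd p -> odd n -> 5 <= p.+1 -> p.+1 <= n ->
  exists e : rel 'I_n,
    [/\ simple_graph e,
        gsize e = (ex n (star_rel p)).+1 &
        ncopies (star_rel p) e = 1].
Proof.
move=> p_even n_odd p_ge4 p_lt_n.
have [h p_eq] : exists h, p = h.*2.
  by exists p./2; rewrite -[LHS]odd_double_half (negbTE p_even).
subst p; have h_gt0 : 0 < h by lia.
exists (@star_witness n h); split.
- exact: star_witness_simple.
- by rewrite ex_star_extremal // gsize_star_witness.
- exact: ncopies_star_witness.
Qed.
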